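(* Let $u,v\in P$ with $u<v$. Then the relations $<$ and ${\rm Low}$ are primitive positive definable in $(P;{\rm Betw},\bot,u,v)$.
   Context: $(P;\leq)$ is the random partial order (Fraïssé limit of all finite partial orders); $x<y$ means $x\leq y\wedge x\neq y$; $x\bot y$ means $x,y$ incomparable; $z\bot xy$ abbreviates $z\bot x\wedge z\bot y$. ${\rm Betw}(x,y,z):=(x<y\wedge y<z)\vee(z<y\wedge y<x)$; ${\rm Low}(x,y,z):=(x<y\wedge z\bot xy)\vee(x<z\wedge y\bot xz)$. $(P;{\rm Betw},\bot,u,v)$ is the structure with relations ${\rm Betw}$, $\bot$ and constants (singleton unary relations) $u,v$. Primitive positive definable: definable by $\exists\bar y$ (conjunction of atomic formulas). *)

From Stdlib Require Import List Arith.
Import ListNotations.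

Section Poset.
Variable T : Type.
Variable le : T -> T -> Prop.

Definition lt (x y : T) : Prop := le x y /\ x <> y.
Definition inc (x y : T) : Prop := ~ le x y /\ ~ le y x.

Definition Betw (x y z : T) : Prop :=
  (lt x y /\ lt y z) \/ (lt z y /\ lt y x).
Definition Low (x y z : T) : Prop :=
  (lt x y /\ inc z x /\ inc z y) \/ (lt x z /\ inc y x /\ inc y z).

Definition is_partial_order : Prop :=
  (forall x, le x x) /\
  (forall x y, le x y -> le y x -> x = y) /\
  (forall x y z, le x y -> le y z -> le x z).

(** The random partial order: the Fraisse limit of the class of all finite
    partial orders, i.e. a countable partial order which is homogeneous and
    whose age is the class of all finite partial orders. *)
Definition random_partial_order : Prop :=
  is_partial_order /\
  (exists f : T -> nat, forall x y, f x = f y -> x = y) /\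
  (forall (n : nat) (r : nat -> nat -> Prop),
     (forall i, i < n -> r i i) ->
     (forall i j, i < n -> j < n -> r i j -> r j i -> i = j) ->
     (forall i j k, i < n -> j < n -> k < n -> r i j -> r j k -> r i k) ->
     exists a : nat -> T, forall i j, i < n -> j < n -> (r i j <-> le (a i) (a j))) /\
  (* homogeneity: every isomorphism between finite substructures
     (a_0..a_{n-1}) -> (b_0..b_{n-1}) extends to an automorphism *)
  (forall (n : nat) (a b : nat -> T),
     (forall i j, i < n -> j < n -> (le (a i) (a j) <-> le (b i) (b j))) ->
     exists (f g : T -> T),
       (forall x, g (f x) = x) /\ (forall x, f (g x) = x) /\
       (forall x y, le x y <-> le (f x) (f y)) /\
       (forall i, i < n -> f (a i) = b i)).

Inductive atom : Type :=
| AEq : nat -> nat -> atom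
| ABetw : nat -> nat -> nat -> atom
| AInc : nat -> nat -> atom
| AU : nat -> atom
| AV : nat -> atom.

Definition atom_holds (u v : T) (e : nat -> T) (a : atom) : Prop :=
  match a with
  | AEq i j => e i = e j
  | ABetw i j k => Betw (e i) (e j) (e k)
  | AInc i j => inc (e i) (e j)
  | AU i => e i = u
  | AV i => e i = v
  end.

(** A relation R of arity n (R only inspects x 0, ..., x (n-1)) is
    primitive positive definable in (T; Betw, inc, u, v) if there is a finite
    conjunction of atomic formulas phi such that R x holds iff there exist
    values of the remaining (existentially quantified) variables i >= n
    making all atoms of phi true. *)
Definition pp_definable (u v : T) (n : nat) (R : (nat -> T) -> Prop) : Prop :=
  exists phi : list atom,
    forall x : nat -> T,
      R x <->
      exists y : nat -> T,
        Forall (atom_holds u v (fun i => if i <? n then x i else y i)) phi.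

End Poset.
Arguments lt {T} le x y.
Arguments inc {T} le x y.
Arguments Betw {T} le x y z.
Arguments Low {T} le x y z.
Arguments random_partial_order {T} le.
Arguments pp_definable {T} le u v n R.

(* Once [u < v] is fixed, [Betw(u,v,q)] forces [v < q], and a short chain of
   betweenness and incomparability constraints transports this orientation to
   an arbitrary pair: [a < b] iff there are [c, d, p, q] with [Betw(a,b,p)],
   [Betw(c,d,p)], [b ⊥ d], [Betw(c,d,q)], [Betw(u,v,q)] and [d ⊥ v].  Given [<],
   [Low(x,y,z)] holds iff [y ⊥ z] and there are [p < y], [q < z] with
   [Betw(p,x,q)], and [r], [s] with [Betw(p,x,r)], [r ⊥ z], [Betw(q,x,s)],
   [s ⊥ y]: the direction of [Betw(p,x,q)] decides which disjunct holds.  The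
   witnesses needed for the converse directions exist because the random
   partial order has the one-point extension property, a consequence of its
   universality and homogeneity. *)

From Stdlib Require Import List Arith Lia Classical.
Import ListNotations.

Section RandomPartialOrder.
Variable T : Type.
Variable le : T -> T -> Prop.
Hypothesis HP : random_partial_order le.

Lemma le_refl x : le x x.
Proof. destruct HP as [[H _] _]; auto. Qed.

Lemma le_antisym x y : le x y -> le y x -> x = y.
Proof. destruct HP as [[_ [H _]] _]; eauto. Qed.

Lemma le_trans x y z : le x y -> le y z -> le x z.
Proof. destruct HP as [[_ [_ H]] _]; eauto. Qed.

Lemma lt_trans x y z : lt le x y -> lt le y z -> lt le x z.
Proof.
  intros [Hxy Nxy] [Hyz Nyz]; split; [eauto using le_trans |].
  intros <-; apply Nxy, le_antisym; auto.
Qed.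

Lemma lt_asym x y : lt le x y -> lt le y x -> False.
Proof. intros [Hxy Nxy] [Hyx _]; apply Nxy, le_antisym; auto. Qed.

Lemma not_lt_of_inc x y z : inc le x y -> lt le y z -> ~ lt le z x.
Proof. intros [_ Nyx] [Hyz _] [Hzx _]; apply Nyx; eauto using le_trans. Qed.

Lemma inc_sym x y : inc le x y -> inc le y x.
Proof. unfold inc; tauto. Qed.

Lemma Betw_sym x y z : Betw le x y z -> Betw le z y x.
Proof. unfold Betw; tauto. Qed.

Lemma Betw_not_lt x y z : Betw le x y z -> ~ lt le z y -> lt le x y /\ lt le y z.
Proof. unfold Betw; tauto. Qed.

Lemma Betw_lt_r x y z : Betw le x y z -> lt le x y -> lt le y z.
Proof. intros [[_ H] | [_ H]] Hxy; [| exfalso; apply (lt_asym x y)]; auto. Qed.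

Lemma Betw_lt_l x y z : Betw le x y z -> lt le y z -> lt le x y.
Proof. intros [[H _] | [H _]] Hyz; [| exfalso; apply (lt_asym y z)]; auto. Qed.

Section OnePointExtension.
Variable n : nat.
Variable L : nat -> T.
Variables Below Above : nat -> Prop.
Hypothesis L_inj : forall i j, i < n -> j < n -> L i = L j -> i = j.
Hypothesis Below_closed :
  forall i j, i < n -> j < n -> le (L j) (L i) -> Below i -> Below j.
Hypothesis Above_closed :
  forall i j, i < n -> j < n -> le (L i) (L j) -> Above i -> Above j.
Hypothesis Below_le_Above :
  forall i j, i < n -> j < n -> Below i -> Above j -> le (L i) (L j).
Hypothesis Below_Above_disjoint : forall i, i < n -> Below i -> Above i -> False.

Let ext_rel (i j : nat) : Prop :=
  if i <? n then (if j <? n then le (L i) (L j) else Below i)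
  else (if j <? n then Above j else True).

Lemma embed_extension :
  exists a : nat -> T,
    (forall i j, i < n -> j < n -> (le (a i) (a j) <-> le (L i) (L j))) /\
    (forall i, i < n -> (le (a i) (a n) <-> Below i) /\ (le (a n) (a i) <-> Above i)).
Proof.
  destruct HP as [_ [_ [Huniv _]]].
  destruct (Huniv (S n) ext_rel) as [a Ha].
  - intros i _; unfold ext_rel; destruct (Nat.ltb_spec i n); auto using le_refl.
  - intros i j Hi Hj; unfold ext_rel.
    destruct (Nat.ltb_spec i n), (Nat.ltb_spec j n); intros Hij Hji; try lia.
    + apply L_inj; auto using le_antisym.
    + exfalso; eauto.
    + exfalso; eauto.
  - intros i j k Hi Hj Hk; unfold ext_rel.
    destruct (Nat.ltb_spec i n), (Nat.ltb_spec j n), (Nat.ltb_spec k n);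
      intros Hij Hjk; eauto using le_trans.
  - exists a; split.
    + intros i j Hi Hj; rewrite <- Ha by lia; unfold ext_rel.
      destruct (Nat.ltb_spec i n), (Nat.ltb_spec j n); tauto || lia.
    + intros i Hi; rewrite <- !Ha by lia; unfold ext_rel.
      destruct (Nat.ltb_spec i n), (Nat.ltb_spec n n); tauto || lia.
Qed.

Lemma one_point_extension :
  exists z, forall i, i < n ->
    (le (L i) z <-> Below i) /\ (le z (L i) <-> Above i) /\ z <> L i.
Proof.
  destruct embed_extension as [a [Ha Han]].
  destruct HP as [_ [_ [_ Hhom]]].
  destruct (Hhom n a L Ha) as [f [g [Hgf [_ [Hf Hfa]]]]].
  exists (f (a n)); intros i Hi.
  rewrite <- (Hfa i Hi), <- !Hf.
  destruct (Han i Hi) as [HB HA].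
  split; [exact HB | split; [exact HA |]].
  intros E; apply (f_equal g) in E; rewrite !Hgf in E.
  apply (Below_Above_disjoint i Hi); [apply HB | apply HA]; rewrite E; apply le_refl.
Qed.

End OnePointExtension.

Lemma exists_inc x : exists z, inc le z x.
Proof.
  destruct (one_point_extension 1 (fun _ => x) (fun _ => False) (fun _ => False))
    as [z Hz]; try (intros; tauto || lia).
  exists z; destruct (Hz 0) as [H1 [H2 _]]; [lia |]; unfold inc; tauto.
Qed.

Lemma exists_lt x : exists z, lt le z x.
Proof.
  destruct (one_point_extension 1 (fun _ => x) (fun _ => False) (fun _ => True))
    as [z Hz]; try (intros; tauto || lia).
  exists z; destruct (Hz 0) as [H1 [H2 H3]]; [lia |]; split; tauto.
Qed.

Lemma two_point_extension x0 x1 (B0 B1 A0 A1 : Prop) :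
  x0 <> x1 ->
  (le x1 x0 -> B0 -> B1) -> (le x0 x1 -> B1 -> B0) ->
  (le x0 x1 -> A0 -> A1) -> (le x1 x0 -> A1 -> A0) ->
  (B0 -> A1 -> le x0 x1) -> (B1 -> A0 -> le x1 x0) ->
  ~ (B0 /\ A0) -> ~ (B1 /\ A1) ->
  exists z, ((le x0 z <-> B0) /\ (le z x0 <-> A0) /\ z <> x0) /\
            ((le x1 z <-> B1) /\ (le z x1 <-> A1) /\ z <> x1).
Proof.
  intros N01 HB10 HB01 HA01 HA10 HBA01 HBA10 D0 D1.
  destruct (one_point_extension 2 (fun i => if i =? 0 then x0 else x1)
              (fun i => if i =? 0 then B0 else B1) (fun i => if i =? 0 then A0 else A1))
    as [z Hz].
  1-4: intros [|[|i]] [|[|j]]; simpl; intros; solve [auto using le_refl | congruence | lia].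
  - intros [|[|i]]; simpl; tauto || lia.
  - exists z; split; [apply (Hz 0) | apply (Hz 1)]; lia.
Qed.

Ltac solve_extension_conditions :=
  unfold lt, inc in *; intuition (subst; eauto using le_refl, le_antisym).

Lemma exists_inc2 x0 x1 : exists z, inc le z x0 /\ inc le z x1.
Proof.
  destruct (classic (x0 = x1)) as [<- | N].
  - destruct (exists_inc x0) as [z Hz]; eauto.
  - destruct (two_point_extension x0 x1 False False False False) as [z Hz];
      [solve_extension_conditions .. | exists z; solve_extension_conditions].
Qed.

Lemma exists_upper_bound_inc x0 x1 :
  inc le x0 x1 -> exists z, lt le x0 z /\ lt le x1 z.
Proof.
  intros H; destruct (two_point_extension x0 x1 True True False False) as [z Hz];
    [solve_extension_conditions .. | exists z; solve_extension_conditions].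
Qed.

Lemma exists_lower_bound_inc x0 x1 :
  inc le x0 x1 -> exists z, lt le z x0 /\ lt le z x1.
Proof.
  intros H; destruct (two_point_extension x0 x1 False False True True) as [z Hz];
    [solve_extension_conditions .. | exists z; solve_extension_conditions].
Qed.

Lemma exists_between x0 x1 : lt le x0 x1 -> exists z, lt le x0 z /\ lt le z x1.
Proof.
  intros H; destruct (two_point_extension x0 x1 True False False True) as [z Hz];
    [solve_extension_conditions .. | exists z; solve_extension_conditions].
Qed.

Lemma exists_lt_inc x0 x1 : inc le x0 x1 -> exists z, lt le z x0 /\ inc le z x1.
Proof.
  intros H; destruct (two_point_extension x0 x1 False False True False) as [z Hz];
    [solve_extension_conditions .. | exists z; solve_extension_conditions].
Qed.

Lemma exists_gt_inc x0 x1 : lt le x0 x1 -> exists z, lt le x0 z /\ inc le z x1.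
Proof.
  intros H; destruct (two_point_extension x0 x1 True False False False) as [z Hz];
    [solve_extension_conditions .. | exists z; solve_extension_conditions].
Qed.

Definition low_witness (x y z p q r s : T) : Prop :=
  inc le y z /\ Betw le p x q /\ Betw le p x r /\ inc le r z /\
  Betw le q x s /\ inc le s y /\ lt le p y /\ lt le q z.

Lemma low_witness_sym x y z p q r s :
  low_witness x z y p q r s -> low_witness x y z q p s r.
Proof. unfold low_witness; intuition (auto using inc_sym, Betw_sym). Qed.

Lemma low_of_witness_half x y z q s :
  lt le x q -> lt le q z -> Betw le q x s -> inc le s y -> inc le y z ->
  lt le x z /\ inc le y x /\ inc le y z.
Proof.
  intros Hxq Hqz Hqxs [Nsy _] Hyz.
  assert (Hxz : lt le x z) by exact (lt_trans _ _ _ Hxq Hqz).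
  assert (Hsx : lt le s x) by exact (Betw_lt_l _ _ _ (Betw_sym _ _ _ Hqxs) Hxq).
  split; [exact Hxz | split; [split | exact Hyz]].
  - intros Hyx; apply (proj1 Hyz), le_trans with x; [exact Hyx | apply Hxz].
  - intros Hxy; apply Nsy, le_trans with x; [apply Hsx | exact Hxy].
Qed.

Lemma low_of_witness x y z p q r s : low_witness x y z p q r s -> Low le x y z.
Proof.
  intros (Hyz & Hpxq & Hpxr & Hrz & Hqxs & Hsy & Hpy & Hqz).
  destruct Hpxq as [[_ Hxq] | [_ Hxp]].
  - right; exact (low_of_witness_half x y z q s Hxq Hqz Hqxs Hsy Hyz).
  - left; exact (low_of_witness_half x z y p r Hxp Hpy Hpxr Hrz (inc_sym _ _ Hyz)).
Qed.

Lemma low_witness_of_lt x y z :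
  lt le x y -> inc le z x -> inc le z y -> exists p q r s, low_witness x y z p q r s.
Proof.
  intros Hxy Hzx Hzy.
  destruct (exists_between x y Hxy) as [p [Hxp Hpy]].
  destruct (exists_lower_bound_inc x z (inc_sym _ _ Hzx)) as [q [Hqx Hqz]].
  destruct (exists_lt_inc x z (inc_sym _ _ Hzx)) as [r [Hrx Hrz]].
  destruct (exists_gt_inc x y Hxy) as [s [Hxs Hsy]].
  exists p, q, r, s; unfold low_witness, Betw; intuition (auto using inc_sym).
Qed.

Lemma low_witness_of_Low x y z : Low le x y z -> exists p q r s, low_witness x y z p q r s.
Proof.
  intros [[Hxy [Hzx Hzy]] | [Hxz [Hyx Hyz]]].
  - exact (low_witness_of_lt x y z Hxy Hzx Hzy).
  - destruct (low_witness_of_lt x z y Hxz Hyx Hyz) as (p & q & r & s & W).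
    exists q, p, s, r; exact (low_witness_sym _ _ _ _ _ _ _ W).
Qed.

Section Anchored.
Variables u v : T.
Hypothesis Huv : lt le u v.

Definition lt_witness (a b c d p q : T) : Prop :=
  Betw le a b p /\ Betw le c d p /\ inc le b d /\
  Betw le c d q /\ Betw le u v q /\ inc le d v.

Lemma lt_of_witness a b c d p q : lt_witness a b c d p q -> lt le a b.
Proof.
  intros (Habp & Hcdp & Hbd & Hcdq & Huvq & Hdv).
  assert (Hvq : lt le v q) by exact (Betw_lt_r _ _ _ Huvq Huv).
  assert (Hcd : lt le c d)
    by exact (proj1 (Betw_not_lt _ _ _ Hcdq (not_lt_of_inc _ _ _ Hdv Hvq))).
  assert (Hdp : lt le d p) by exact (Betw_lt_r _ _ _ Hcdp Hcd).
  exact (proj1 (Betw_not_lt _ _ _ Habp (not_lt_of_inc _ _ _ Hbd Hdp))).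
Qed.

Lemma lt_witness_of_lt a b : lt le a b -> exists c d p q, lt_witness a b c d p q.
Proof.
  intros Hab.
  destruct (exists_inc2 b v) as [d [Hdb Hdv]].
  destruct (exists_lt d) as [c Hcd].
  destruct (exists_upper_bound_inc b d (inc_sym _ _ Hdb)) as [p [Hbp Hdp]].
  destruct (exists_upper_bound_inc d v Hdv) as [q [Hdq Hvq]].
  exists c, d, p, q; unfold lt_witness, Betw; intuition (auto using inc_sym).
Qed.

Definition lt_formula (a b c d p q iu iv : nat) : list atom :=
  [AU iu; AV iv; ABetw a b p; ABetw c d p; AInc b d; ABetw c d q; ABetw iu iv q; AInc d iv].

Lemma lt_formula_holds (e : nat -> T) (a b c d p q iu iv : nat) :
  Forall (atom_holds T le u v e) (lt_formula a b c d p q iu iv) <->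
  e iu = u /\ e iv = v /\ lt_witness (e a) (e b) (e c) (e d) (e p) (e q).
Proof.
  unfold lt_formula, lt_witness; rewrite !Forall_cons_iff; simpl.
  split; intros (Eu & Ev & H); rewrite ?Eu, ?Ev in *; intuition.
Qed.

(* [x, y, z, p, q, r, s, u, v] are the variables [0, ..., 8]; the two copies
   of [lt_formula] express [p < y] and [q < z]. *)
Definition low_formula : list atom :=
  [AInc 1 2; ABetw 3 0 4; ABetw 3 0 5; AInc 5 2; ABetw 4 0 6; AInc 6 1]
  ++ lt_formula 3 1 9 10 11 12 7 8 ++ lt_formula 4 2 13 14 15 16 7 8.

Lemma low_formula_holds (e : nat -> T) :
  Forall (atom_holds T le u v e) low_formula <->
  (inc le (e 1) (e 2) /\ Betw le (e 3) (e 0) (e 4) /\ Betw le (e 3) (e 0) (e 5) /\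
   inc le (e 5) (e 2) /\ Betw le (e 4) (e 0) (e 6) /\ inc le (e 6) (e 1)) /\
  (e 7 = u /\ e 8 = v /\ lt_witness (e 3) (e 1) (e 9) (e 10) (e 11) (e 12)) /\
  (e 7 = u /\ e 8 = v /\ lt_witness (e 4) (e 2) (e 13) (e 14) (e 15) (e 16)).
Proof.
  unfold low_formula.
  rewrite !Forall_app, !lt_formula_holds, !Forall_cons_iff, Forall_nil_iff.
  simpl; tauto.
Qed.

Lemma pp_definable_lt : pp_definable le u v 2 (fun x => lt le (x 0) (x 1)).
Proof.
  exists (lt_formula 0 1 2 3 4 5 6 7); intros x; split.
  - intros Hab; destruct (lt_witness_of_lt _ _ Hab) as (c & d & p & q & W).
    exists (fun i => match i with 2 => c | 3 => d | 4 => p | 5 => q | 6 => u | _ => v end).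
    apply lt_formula_holds; simpl; auto.
  - intros [y Hy]; apply lt_formula_holds in Hy; simpl in Hy.
    destruct Hy as (_ & _ & W); exact (lt_of_witness _ _ _ _ _ _ W).
Qed.

Lemma pp_definable_Low : pp_definable le u v 3 (fun x => Low le (x 0) (x 1) (x 2)).
Proof.
  exists low_formula; intros x; split.
  - intros HL; destruct (low_witness_of_Low _ _ _ HL) as (p & q & r & s & W).
    pose proof W as (_ & _ & _ & _ & _ & _ & Hpy & Hqz).
    destruct (lt_witness_of_lt _ _ Hpy) as (c1 & d1 & p1 & q1 & W1).
    destruct (lt_witness_of_lt _ _ Hqz) as (c2 & d2 & p2 & q2 & W2).
    exists (fun i => match i with
                     | 3 => p | 4 => q | 5 => r | 6 => s | 7 => u | 8 => v
                     | 9 => c1 | 10 => d1 | 11 => p1 | 12 => q1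
                     | 13 => c2 | 14 => d2 | 15 => p2 | _ => q2 end).
    apply low_formula_holds; simpl; unfold low_witness in W; tauto.
  - intros [y Hy]; apply low_formula_holds in Hy; simpl in Hy.
    destruct Hy as (Hcore & (_ & _ & W1) & (_ & _ & W2)).
    apply lt_of_witness in W1, W2.
    apply (low_of_witness _ _ _ (y 3) (y 4) (y 5) (y 6)).
    unfold low_witness; tauto.
Qed.

End Anchored.
End RandomPartialOrder.

Theorem lemma60 (T : Type) (le : T -> T -> Prop)
  (HP : random_partial_order le) (u v : T) (Huv : lt le u v) :
  pp_definable le u v 2 (fun x => lt le (x 0) (x 1)) /\
  pp_definable le u v 3 (fun x => Low le (x 0) (x 1) (x 2)).
Proof.
  exact (conj (pp_definable_lt T le HP u v Huv) (pp_definable_Low T le HP u v Huv)).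
Qed.
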